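(* Let $H$ be any graph obtained from $F_4$ by splitting a vertex. Then $H$ contains $K_{3,4}$ as a minor.
   Context: $F_4$ is the graph with vertex set $\{f^1,f^2\}\cup\{f^i_j: i\in\{1,2\}, j\in\{1,2,3,4\}\}$ and the 16 edges: for each $i\in\{1,2\}$, $f^if^i_1$, $f^if^i_2$, $f^if^i_4$, $f^i_3f^i_1$, $f^i_3f^i_2$, $f^i_3f^i_4$; and $f^1_jf^2_{5-j}$ for $j=1,2,3,4$. Splitting a vertex $v$ of a graph means: delete $v$, add two new adjacent vertices $v_1,v_2$, and join each neighbour of $v$ to exactly one of $v_1,v_2$, so that each of $v_1,v_2$ is joined to at least two neighbours of $v$. *)

(* Finite simple graphs as symmetric irreflexive relations on a finType. *)
From mathcomp Require Import all_boot.
Set Implicit Arguments. Unset Strict Implicit. Unset Printing Implicit Defensive.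

Section Graphs.
Variables (T U : finType).

Definition connected_in (e : rel T) (X : {set T}) : Prop :=
  forall x y, x \in X -> y \in X ->
    connect [rel a b | [&& a \in X, b \in X & e a b]] x y.

Definition minor_model (eH : rel U) (e : rel T) (phi : U -> {set T}) : Prop :=
  [/\ forall u, phi u != set0,
      forall u w, u != w -> [disjoint phi u & phi w],
      forall u, connected_in e (phi u)
    & forall u w, eH u w -> exists a b, [/\ a \in phi u, b \in phi w & e a b]].

Definition has_minor (eH : rel U) (e : rel T) : Prop :=
  exists phi : U -> {set T}, minor_model eH e phi.
End Graphs.

(* Splitting vertex v of (T, e): v is replaced by v1 := Some v and
   v2 := None; v1 v2 adjacent; neighbours of v in S go to v1, the other
   neighbours of v go to v2; other vertices/edges unchanged. *)
Definition split_rel (T : finType) (e : rel T) (v : T) (S : {set T}) : rel (option T) :=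
  fun x y => match x, y with
  | Some a, Some b =>
      if a == v then [&& b != v, e v b & b \in S]
      else if b == v then [&& e v a & a \in S]
      else e a b
  | None, Some b => (b == v) || [&& b != v, e v b & b \notin S]
  | Some a, None => (a == v) || [&& a != v, e v a & a \notin S]
  | None, None => false
  end.

Definition split_ok (T : finType) (e : rel T) (v : T) (S : {set T}) : Prop :=
  [/\ S \subset [set w | e v w],
      1 < #|S|
    & 1 < #|[set w | e v w] :\: S|].

Definition Kmn (m n : nat) : rel ('I_m + 'I_n)%type :=
  fun x y => match x, y with
  | inl _, inr _ | inr _, inl _ => true
  | _, _ => false
  end.
Arguments Kmn m n : clear implicits.

(* F_4: vertex f^i = (i-1, None), f^i_j = (i-1, Some (j-1)). *)
Definition F4V : finType := ('I_2 * option 'I_4)%type.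

Definition F4_base (x y : F4V) : bool :=
  match x, y with
  | (i, None), (i', Some j) => (i == i') && (val j != 2)        (* f^i f^i_j, j in {1,2,4} *)
  | (i, Some j3), (i', Some j) =>
      [&& i == i', val j3 == 2 & val j != 2]                   (* f^i_3 f^i_j, j in {1,2,4} *)
      || [&& val i == 0, val i' == 1 & val j3 + val j == 3]    (* f^1_j f^2_{5-j} *)
  | _, _ => false
  end.

Definition F4 : rel F4V := fun x y => F4_base x y || F4_base y x.

From mathcomp Require Import all_boot zify.
Set Implicit Arguments. Unset Strict Implicit. Unset Printing Implicit Defensive.

(* Splitting v needs two neighbours of v on each side, so deg v >= 4.  In F_4
   every vertex has degree 3 except f^1_3 and f^2_3, which have degree 4; so
   H comes from splitting f^1_3 or f^2_3 with exactly two neighbours on each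
   side, twelve cases in all, and each of them contains one of eleven explicit
   K_{3,4} models, which are checked by computation. *)

Section MinorModels.
Variables (T U : finType) (eH : rel U).

Lemma eq_minor_model (e1 e2 : rel T) (phi : U -> {set T}) :
  e1 =2 e2 -> minor_model eH e1 phi -> minor_model eH e2 phi.
Proof.
move=> e12 [ne disj conn edges]; split=> // [u x y xu yu | u w /edges].
  by rewrite (@eq_connect _ _ [rel a b | [&& a \in phi u, b \in phi u & e1 a b]])
    ?conn // => a b /=; rewrite e12.
by case=> a [b [au bw ab]]; exists a, b; rewrite -e12.
Qed.

Variable e : rel T.

Fixpoint connected_from (seen r : seq T) : bool :=
  if r is y :: r' then has (fun z => e y z && e z y) seen && connected_from (y :: seen) r'
  else true.

Definition connected_seq (l : seq T) : bool :=
  if l is x :: r then connected_from [:: x] r else true.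

Let adj (X : {set T}) := [rel a b | [&& a \in X, b \in X, e a b & e b a]].

Lemma connected_from_connect (X : {set T}) x0 seen r :
  {subset seen <= X} -> {subset r <= X} ->
  {in seen, forall z, connect (adj X) x0 z} -> connected_from seen r ->
  {in r, forall z, connect (adj X) x0 z}.
Proof.
elim: r seen => [|y r IHr] seen seenX rX x0seen //=.
case/andP=> /hasP[z zs /andP[eyz ezy]] from_r.
have yX : y \in X by apply: rX; rewrite mem_head.
have x0y : connect (adj X) x0 y.
  apply: connect_trans (x0seen z zs) (connect1 _).
  by rewrite /= yX (seenX z zs) eyz ezy.
move=> w; rewrite inE => /predU1P[-> // | wr].
apply: (IHr (y :: seen)) => // [q | q qr | q].
- by case/predU1P=> [-> // | /seenX].
- by apply: rX; rewrite inE qr orbT.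
- by case/predU1P=> [-> // | /x0seen].
Qed.

Lemma connected_seq_in (l : seq T) : connected_seq l -> connected_in e [set x in l].
Proof.
case: l => [|x0 r] conn_l x y; rewrite !in_set ?in_nil // => xl yl.
set X := [set x in x0 :: r].
have lX : {subset x0 :: r <= X} by move=> q; rewrite in_set.
have x0l : {in x0 :: r, forall z, connect (adj X) x0 z}.
  move=> z /predU1P[-> // | zr].
  apply: (connected_from_connect (seen := [:: x0])) conn_l z zr => // [q | q qr | q].
  - by rewrite inE => /eqP ->; apply: lX; rewrite mem_head.
  - by apply: lX; rewrite inE qr orbT.
  - by rewrite inE => /eqP ->.
have adj_sym : connect_sym (adj X).
  apply: sym_connect_sym => a b /=.
  by case: (a \in X) (b \in X) (e a b) (e b a) => [] [] [] [].
have /connect_trans : connect (adj X) x x0 by rewrite adj_sym x0l.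
move=> /(_ _ (x0l y yl)); apply: connect_sub => a b /and4P[aX bX eab _].
by apply: connect1; rewrite /= aX bX eab.
Qed.

Definition model_check (us : seq U) (B : U -> seq T) : bool :=
  [&& all (fun u => B u != [::]) us,
      all (fun u => all (fun w => (u == w) || ~~ has (mem (B w)) (B u)) us) us,
      all (fun u => connected_seq (B u)) us
    & all (fun u => all (fun w => eH u w ==> has (fun a => has (e a) (B w)) (B u)) us) us].

Lemma model_check_minor (us : seq U) (B : U -> seq T) :
  (forall u, u \in us) -> model_check us B -> minor_model eH e (fun u => [set x in B u]).
Proof.
move=> us_all /and4P[/allP ne /allP disj /allP conn /allP edges].
split=> [u | u w uw | u | u w euw].
- apply/set0Pn; move: (ne u (us_all u)).
  by case: (B u) => // x l _; exists x; rewrite inE mem_head.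
- move/allP/(_ w (us_all w)): (disj u (us_all u)); rewrite (negbTE uw) /=.
  by move/hasPn=> Bu; rewrite disjoint_subset; apply/subsetP=> x; rewrite !inE => /Bu.
- exact: connected_seq_in (conn u (us_all u)).
- move/allP/(_ w (us_all w)): (edges u (us_all u)); rewrite euw.
  by case/hasP=> a au /hasP[b bw eab]; exists a, b; rewrite !inE.
Qed.

End MinorModels.

Section Splitting.
Variables (T : finType) (e : rel T) (v : T).

(* [split_rel] with membership in [S] replaced by a predicate: unlike finset
   membership, a predicate such as [pred2 a b] can be evaluated by [vm_compute]. *)
Definition split_rel_pred (P : pred T) : rel (option T) :=
  fun x y => match x, y with
  | Some a, Some b =>
      if a == v then [&& b != v, e v b & P b]
      else if b == v then e v a && P a
      else e a b
  | None, Some b => (b == v) || [&& b != v, e v b & ~~ P b]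
  | Some a, None => (a == v) || [&& a != v, e v a & ~~ P a]
  | None, None => false
  end.

Lemma split_rel_predE (S : {set T}) (P : pred T) :
  S =i P -> split_rel e v S =2 split_rel_pred P.
Proof. by move=> SP [a|] [b|] //=; rewrite ?SP. Qed.

Lemma split_ok_card (S : {set T}) :
  split_ok e v S -> #|[set w | e v w]| = #|S| + #|[set w | e v w] :\: S|.
Proof. by case=> /setIidPr S_nbrs _ _; rewrite -(cardsID S) S_nbrs. Qed.

Lemma split_ok_deg (S : {set T}) : split_ok e v S -> 3 < #|[set w | e v w]|.
Proof. by move=> ok; rewrite (split_ok_card ok); case: ok => _; lia. Qed.

Lemma split_ok_deg4 (S : {set T}) :
  split_ok e v S -> #|[set w | e v w]| = 4 -> #|S| = 2.
Proof. by move=> ok; rewrite (split_ok_card ok); case: ok => _; lia. Qed.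

End Splitting.

(* f^i and f^i_j of F_4, with the paper's 1-based indices. *)
Notation f i := ((@Ordinal 2 i.-1 isT, None) : F4V).
Notation f_ i j := ((@Ordinal 2 i.-1 isT, Some (@Ordinal 4 j.-1 isT)) : F4V).

Definition F4_vertices : seq F4V :=
  [:: f 1; f_ 1 1; f_ 1 2; f_ 1 3; f_ 1 4; f 2; f_ 2 1; f_ 2 2; f_ 2 3; f_ 2 4].

Lemma mem_F4_vertices (x : F4V) : x \in F4_vertices.
Proof. by case: x => [[[|[|i]] ?] [[[|[|[|[|j]]]] ?]|]]. Qed.

Definition F4_nbrs (x : F4V) : seq F4V := [seq y <- F4_vertices | F4 x y].

Lemma card_F4_nbrs (x : F4V) : #|[set y | F4 x y]| = size (F4_nbrs x).
Proof.
rewrite -(card_uniqP (filter_uniq _ (isT : uniq F4_vertices))).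
by apply: eq_card => y; rewrite inE mem_filter mem_F4_vertices andbT.
Qed.

Lemma F4_degree (x : F4V) :
  #|[set y | F4 x y]| = if x \in [:: f_ 1 3; f_ 2 3] then 4 else 3.
Proof.
have degrees : all (fun x =>
    size (F4_nbrs x) == if x \in [:: f_ 1 3; f_ 2 3] then 4 else 3) F4_vertices.
  by vm_compute.
by rewrite card_F4_nbrs; apply/eqP/(allP degrees)/mem_F4_vertices.
Qed.

Definition K34_vertices : seq ('I_3 + 'I_4) :=
  [:: inl (@Ordinal 3 0 isT); inl (@Ordinal 3 1 isT); inl (@Ordinal 3 2 isT);
      inr (@Ordinal 4 0 isT); inr (@Ordinal 4 1 isT); inr (@Ordinal 4 2 isT);
      inr (@Ordinal 4 3 isT)].

Lemma mem_K34_vertices (u : 'I_3 + 'I_4) : u \in K34_vertices.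
Proof. by case: u => [[[|[|[|i]]] ?] | [[|[|[|[|j]]]] ?]]. Qed.

Definition K34_branch (AB : seq (seq (option F4V)) * seq (seq (option F4V)))
    (u : 'I_3 + 'I_4) : seq (option F4V) :=
  match u with inl i => nth [::] AB.1 i | inr j => nth [::] AB.2 j end.

(* In H, [F i] and [F_ i j] are the vertices inherited from F_4, the split
   vertex itself playing v_1, and [v2] is v_2. *)
Local Notation F i := (Some (f i)).
Local Notation F_ i j := (Some (f_ i j)).
Local Notation v2 := (None : option F4V).

Definition K34_models : seq (seq (seq (option F4V)) * seq (seq (option F4V))) := [::
  ([:: [:: F_ 1 1; F_ 2 4; F 2]; [:: F_ 1 2; F_ 2 3]; [:: F_ 1 4; v2]],
   [:: [:: F 1]; [:: F_ 1 3]; [:: F_ 2 1]; [:: F_ 2 2]]);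
  ([:: [:: F_ 1 1; F_ 2 4]; [:: F_ 1 4; F_ 2 1]; [:: F_ 2 2; v2]],
   [:: [:: F 1; F_ 1 2]; [:: F_ 1 3]; [:: F 2]; [:: F_ 2 3]]);
  ([:: [:: F_ 1 1; F_ 1 3]; [:: F_ 1 2; F_ 2 3]; [:: F_ 1 4; F_ 2 1; F 2]],
   [:: [:: F 1]; [:: F_ 2 2]; [:: F_ 2 4]; [:: v2]]);
  ([:: [:: F_ 1 1; v2]; [:: F_ 1 2; F_ 2 3]; [:: F_ 1 4; F_ 2 1; F 2]],
   [:: [:: F 1]; [:: F_ 1 3]; [:: F_ 2 2]; [:: F_ 2 4]]);
  ([:: [:: F_ 1 1; F_ 2 4]; [:: F_ 1 3; F_ 2 2]; [:: F_ 1 4; F_ 2 1]],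
   [:: [:: F 1; F_ 1 2]; [:: F 2]; [:: F_ 2 3]; [:: v2]]);
  ([:: [:: F_ 1 1; F_ 2 4; F 2]; [:: F_ 1 2; F_ 2 3]; [:: F_ 1 3; F_ 1 4]],
   [:: [:: F 1]; [:: F_ 2 1]; [:: F_ 2 2]; [:: v2]]);
  ([:: [:: F 1; F_ 1 1; F_ 2 4]; [:: F_ 1 3; F_ 2 2]; [:: F_ 2 1; F_ 2 3]],
   [:: [:: F_ 1 2]; [:: F_ 1 4]; [:: F 2]; [:: v2]]);
  ([:: [:: F_ 1 1; F_ 2 4]; [:: F_ 1 4; F_ 2 1]; [:: F_ 2 2; F_ 2 3]],
   [:: [:: F 1; F_ 1 2]; [:: F_ 1 3]; [:: F 2]; [:: v2]]);
  ([:: [:: F 1; F_ 1 4; F_ 2 1]; [:: F_ 1 3; F_ 2 2]; [:: F_ 2 3; F_ 2 4]],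
   [:: [:: F_ 1 1]; [:: F_ 1 2]; [:: F 2]; [:: v2]]);
  ([:: [:: F 1; F_ 1 4; F_ 2 1]; [:: F_ 1 3; F_ 2 2]; [:: F_ 2 4; v2]],
   [:: [:: F_ 1 1]; [:: F_ 1 2]; [:: F 2]; [:: F_ 2 3]]);
  ([:: [:: F 1; F_ 1 1; F_ 2 4]; [:: F_ 1 3; F_ 2 2]; [:: F_ 2 1; v2]],
   [:: [:: F_ 1 2]; [:: F_ 1 4]; [:: F 2]; [:: F_ 2 3]])
].

Lemma F4_split_models :
  all (fun x => all (fun a => all (fun b => (a == b) ||
         has (fun AB => model_check (Kmn 3 4) (split_rel_pred F4 x (pred2 a b))
                                    K34_vertices (K34_branch AB)) K34_models)
       (F4_nbrs x)) (F4_nbrs x)) [:: f_ 1 3; f_ 2 3].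
Proof. by vm_compute. Qed.

Theorem lemma4p10 (v : F4V) (S : {set F4V}) :
  split_ok F4 v S -> has_minor (Kmn 3 4) (split_rel F4 v S).
Proof.
move=> ok; have deg := split_ok_deg ok.
have v_deg4 : v \in [:: f_ 1 3; f_ 2 3] by move: deg; rewrite F4_degree; case: ifP.
have /cards2P[a [b [ab defS]]] : #|S| == 2.
  by rewrite (split_ok_deg4 ok) // F4_degree v_deg4.
have S_nbrs y : y \in S -> y \in F4_nbrs v.
  case: ok => /subsetP sub _ _ /sub; rewrite inE mem_filter => ->.
  exact: mem_F4_vertices.
have [aN bN] : a \in F4_nbrs v /\ b \in F4_nbrs v.
  by rewrite !S_nbrs // defS !inE eqxx ?orbT.
move/allP/(_ v v_deg4)/allP/(_ a aN)/allP/(_ b bN): F4_split_models.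
case/orP=> [/eqP a_eq_b | /hasP[AB _ /(model_check_minor mem_K34_vertices) model]].
  by rewrite a_eq_b eqxx in ab.
exists (fun u => [set x in K34_branch AB u]).
apply: eq_minor_model model => x y.
by rewrite (@split_rel_predE _ _ _ S (pred2 a b)) // defS => w; rewrite !inE.
Qed.
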